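(* Let $(X,\perp,Y,T)$ be an implicative frame, and for $A,C\in\mathcal{G}(X)$ let $A\Rightarrow C={}'(A\blacktriangleright C')$. Then: (1) for families $A_i\in\mathcal{G}(X)$ ($i\in I$), $C_j\in\mathcal{G}(X)$ ($j\in J$): $\left(\bigvee_{i}A_i\right)\Rightarrow\left(\bigcap_{j}C_j\right)=\bigcap_{i\in I,j\in J}(A_i\Rightarrow C_j)$; (2) $A\Rightarrow C=\bigcap\{\Gamma x\Rightarrow{}'\{y\}: x\in A,\ y\in Y,\ C\perp y\}$; (3) for all $u,x\in X$ and $y\in Y$: $uT'xy$ iff $u\in(\Gamma x\Rightarrow{}'\{y\})$; (4) $u\in(A\Rightarrow C)$ iff for all $x\in X$ and $y\in Y$, if $x\in A$ and $C\perp y$ then $uT'xy$; (5) for any $A,C\in\mathcal{G}(X)$: $A\subseteq C$ iff $X\subseteq A\Rightarrow C$.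
   Context: A sorted frame (polarity) is a triple $(X,\perp,Y)$ with $X,Y$ nonempty sets and ${\perp}\subseteq X\times Y$. For $U\subseteq X$ let $U'=\{y\in Y:\forall x\in U\ x\perp y\}$, and for $V\subseteq Y$ let ${}'V=\{x\in X:\forall y\in V\ x\perp y\}$. $A\subseteq X$ is stable if $A={}'(A')$; $B\subseteq Y$ is co-stable if $B=({}'B)'$. $\mathcal{G}(X)$, $\mathcal{G}(Y)$ are the complete lattices of stable, resp. co-stable, sets under inclusion (meets are intersections; the join of a family is the closure of its union, where the closure of $W\subseteq X$ is ${}'(W')$ and of $W\subseteq Y$ is $W''=({}'W)'$). For $A\in\mathcal G(X)$, $y\in Y$, $A\perp y$ means $x\perp y$ for all $x\in A$. Preorders: for $x,z\in X$, $x\le z$ iff $\{x\}'\subseteq\{z\}'$; for $y,v\in Y$, $y\le v$ iff ${}'\{y\}\subseteq{}'\{v\}$; the frame is separated if both are partial orders. $\Gamma u$ is the set of elements (of the same sort) above $u$. For $T\subseteq Y\times X\times Y$ (write $yTxv$), its Galois dual $T'\subseteq X\times X\times Y$ is given by $uT'xv$ iff $\forall y\in Y\,(yTxv\Rightarrow u\perp y)$. An implicative frame is $(X,\perp,Y,T)$ with $T\subseteq Y\times X\times Y$ such that: (F0) for all $x\in X,y\in Y$: $x\perp y$ iff $uT'xy$ for all $u\in X$; (F1) the frame is separated; (F2) for all $x\in X,v\in Y$ the set $\{y\in Y: yTxv\}$ equals $\Gamma w$ for some $w\in Y$; (F3) for each $y\in Y$, if $yTxv$, $x_1\le x$ and $v_1\le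 v$ then $yTx_1v_1$; (F4) for all $u,x\in X$ and $v\in Y$, the set $\{x_1\in X:uT'x_1v\}$ is stable and the set $\{v_1\in Y:uT'xv_1\}$ is co-stable. For $A\in\mathcal{G}(X)$, $B\in\mathcal{G}(Y)$ define $A\blacktriangleright B=\left(\{y\in Y:\exists x\in A\,\exists v\in B\ yTxv\}\right)''$. *)

Section Frames.
Context {X Y : Type} (perp : X -> Y -> Prop).

Definition upper (U : X -> Prop) : Y -> Prop :=
  fun y => forall x, U x -> perp x y.
Definition lower (V : Y -> Prop) : X -> Prop :=
  fun x => forall y, V y -> perp x y.

Definition seteq {Z : Type} (P Q : Z -> Prop) : Prop := forall z, P z <-> Q z.
Definition subset {Z : Type} (P Q : Z -> Prop) : Prop := forall z, P z -> Q z.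

Definition stable (A : X -> Prop) : Prop := seteq A (lower (upper A)).
Definition costable (B : Y -> Prop) : Prop := seteq B (upper (lower B)).

Definition perpset (A : X -> Prop) (y : Y) : Prop := forall x, A x -> perp x y.

Definition singleY (y : Y) : Y -> Prop := fun v => v = y.

Definition leX (x z : X) : Prop := subset (upper (fun w => w = x)) (upper (fun w => w = z)).
Definition leY (y v : Y) : Prop := subset (lower (singleY y)) (lower (singleY v)).

Definition separated : Prop :=
  (forall x z, leX x z -> leX z x -> x = z) /\
  (forall y v, leY y v -> leY v y -> y = v).

Definition GammaX (x : X) : X -> Prop := fun z => leX x z.
Definition GammaY (y : Y) : Y -> Prop := fun v => leY y v.

Definition bigjoin {I : Type} (A : I -> X -> Prop) : X -> Prop :=
  lower (upper (fun x => exists i, A i x)).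
Definition bigcap {I : Type} (A : I -> X -> Prop) : X -> Prop :=
  fun x => forall i, A i x.

Section WithT.
Variable T : Y -> X -> Y -> Prop.

Definition Tdual (u x : X) (v : Y) : Prop := forall y, T y x v -> perp u y.

Definition implicative_frame : Prop :=
  inhabited X /\ inhabited Y /\
  (forall x y, perp x y <-> (forall u, Tdual u x y)) /\
  separated /\
  (forall x v, exists w, seteq (fun y => T y x v) (GammaY w)) /\
  (forall y x v x1 v1, T y x v -> leX x1 x -> leY v1 v -> T y x1 v1) /\
  (forall u x v, stable (fun x1 => Tdual u x1 v) /\
                          costable (fun v1 => Tdual u x v1)).

Definition blacktri (A : X -> Prop) (B : Y -> Prop) : Y -> Prop :=
  upper (lower (fun y => exists x v, A x /\ B v /\ T y x v)).

Definition impl (A C : X -> Prop) : X -> Prop := lower (blacktri A (upper C)).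
End WithT.
End Frames.


(* Everything rests on the characterisation: u ∈ A ⇒ C iff u T' x y for all
   x ∈ A and y ∈ C', which comes from unfolding the double Galois closure in
   A ▶ C'.  Monotonicity (F3) identifies the pairs u T' x y with the principal
   implications Γx ⇒ '{y}; (F0) turns "every u" into x ⊥ y; and stability of
   the sections of T' (F4) lets the characterisation pass through the closures
   in ⋁ A_i and in (⋂ C_j)'. *)

Section ImplicativeFrame.
Context {X Y : Type} (perp : X -> Y -> Prop) (T : Y -> X -> Y -> Prop).

Lemma implP (A C : X -> Prop) (u : X) :
  impl perp T A C u <->
  (forall x y, A x -> perpset perp C y -> Tdual perp T u x y).
Proof.
  unfold impl, blacktri, Tdual; split.
  - intros H x v HA HC y HT. apply H. intros x' Hx'. apply Hx'.
    exists x, v. auto.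
  - intros H y' Hy'. apply Hy'. intros y [x [v [HA [HC HT]]]].
    exact (H x v HA HC y HT).
Qed.

Lemma impl_antitone (A A' C C' : X -> Prop) :
  subset A' A -> subset C C' -> subset (impl perp T A C) (impl perp T A' C').
Proof.
  intros HA HC u Hu. apply implP. intros x y Hx Hy.
  apply (proj1 (implP A C u) Hu).
  - apply HA. exact Hx.
  - intros z Hz. apply Hy. apply HC. exact Hz.
Qed.

Lemma subset_bigjoin {I : Type} (A : I -> X -> Prop) (i : I) :
  subset (A i) (bigjoin perp A).
Proof. intros x Hx y Hy. apply Hy. exists i. exact Hx. Qed.

Lemma bigjoin_sub_stable {I : Type} (A : I -> X -> Prop) (S : X -> Prop) :
  stable perp S -> (forall i, subset (A i) S) -> subset (bigjoin perp A) S.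
Proof.
  intros HS HAS x Hx. apply (proj2 (HS x)). intros y Hy. apply Hx.
  intros x1 [i Hx1]. apply Hy. exact (HAS i x1 Hx1).
Qed.

Lemma upper_bigcap_sub_costable {J : Type} (C : J -> X -> Prop) (B : Y -> Prop) :
  (forall j, stable perp (C j)) -> costable perp B ->
  (forall j, subset (upper perp (C j)) B) -> subset (upper perp (bigcap C)) B.
Proof.
  intros HC HB HCB y Hy. apply (proj2 (HB y)). intros x Hx. apply Hy.
  intros j. apply (proj2 (HC j x)). intros v Hv. apply Hx. exact (HCB j v Hv).
Qed.

Section Monotone.
Hypothesis F3 : forall y x v x1 v1, T y x v -> leX perp x1 x -> leY perp v1 v ->
  T y x1 v1.

Lemma Tdual_monotone (u x x1 : X) (y v : Y) :
  Tdual perp T u x y -> leX perp x x1 -> leY perp y v -> Tdual perp T u x1 v.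
Proof. intros H Hx Hy z Hz. apply H. exact (F3 z x1 v x y Hz Hx Hy). Qed.

Lemma Tdual_iff_impl_principal (u x : X) (y : Y) :
  Tdual perp T u x y <->
  impl perp T (GammaX perp x) (lower perp (singleY y)) u.
Proof.
  split.
  - intros H. apply implP. intros x1 v Hx1 Hv.
    apply (Tdual_monotone u x x1 y v H Hx1).
    intros w Hw y0 Hy0. rewrite Hy0. apply Hv. exact Hw.
  - intros H. apply (proj1 (implP _ _ u) H).
    + intros w Hw. exact Hw.
    + intros w Hw. apply Hw. reflexivity.
Qed.

Lemma impl_eq_bigcap_principal (A C : X -> Prop) :
  seteq (impl perp T A C)
    (fun u => forall x y, A x -> perpset perp C y ->
                impl perp T (GammaX perp x) (lower perp (singleY y)) u).
Proof.
  intros u. split.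
  - intros H x y Hx Hy. apply Tdual_iff_impl_principal.
    exact (proj1 (implP A C u) H x y Hx Hy).
  - intros H. apply implP. intros x y Hx Hy.
    apply Tdual_iff_impl_principal. exact (H x y Hx Hy).
Qed.
End Monotone.

Lemma impl_bigjoin_bigcap
    (F4 : forall u x v, stable perp (fun x1 => Tdual perp T u x1 v) /\
                        costable perp (fun v1 => Tdual perp T u x v1))
    {I J : Type} (A : I -> X -> Prop) (C : J -> X -> Prop) :
  (forall j, stable perp (C j)) ->
  seteq (impl perp T (bigjoin perp A) (bigcap C))
        (fun u => forall i j, impl perp T (A i) (C j) u).
Proof.
  intros HC u. split.
  - intros H i j.
    apply (impl_antitone _ _ _ _ (subset_bigjoin A i) (fun x Hx => Hx j) u H).
  - intros H. apply implP. intros x v Hx Hv.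
    assert (HAi : forall i x1, A i x1 -> Tdual perp T u x1 v).
    { intros i x1 Hx1.
      apply (upper_bigcap_sub_costable C _ HC (proj2 (F4 u x1 v))); [|exact Hv].
      intros j v1 Hv1. exact (proj1 (implP _ _ u) (H i j) x1 v1 Hx1 Hv1). }
    exact (bigjoin_sub_stable A _ (proj1 (F4 u x v)) HAi x Hx).
Qed.

Lemma subset_iff_impl_full
    (F0 : forall x y, perp x y <-> (forall u, Tdual perp T u x y))
    (A C : X -> Prop) :
  stable perp C ->
  (subset A C <-> subset (fun _ : X => True) (impl perp T A C)).
Proof.
  intros HC. split.
  - intros H u _. apply implP. intros x y Hx Hy.
    apply F0. apply Hy. exact (H x Hx).
  - intros H x Hx. apply (proj2 (HC x)). intros y Hy. apply F0. intros u.
    exact (proj1 (implP A C u) (H u I) x y Hx Hy).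
Qed.

End ImplicativeFrame.

Theorem proposition3p6 (X Y : Type) (perp : X -> Y -> Prop)
    (T : Y -> X -> Y -> Prop) :
  implicative_frame perp T ->
  (* (1) *)
  (forall (I J : Type) (A : I -> X -> Prop) (C : J -> X -> Prop),
      (forall i, stable perp (A i)) -> (forall j, stable perp (C j)) ->
      seteq (impl perp T (bigjoin perp A) (bigcap C))
            (fun u => forall i j, impl perp T (A i) (C j) u)) /\
  (* (2) *)
  (forall A C : X -> Prop, stable perp A -> stable perp C ->
      seteq (impl perp T A C)
            (fun u => forall x y, A x -> perpset perp C y ->
                        impl perp T (GammaX perp x) (lower perp (singleY y)) u)) /\
  (* (3) *)
  (forall (u x : X) (y : Y),
      Tdual perp T u x y <-> impl perp T (GammaX perp x) (lower perp (singleY y)) u) /\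
  (* (4) *)
  (forall A C : X -> Prop, stable perp A -> stable perp C ->
      forall u, impl perp T A C u <->
        (forall x y, A x -> perpset perp C y -> Tdual perp T u x y)) /\
  (* (5) *)
  (forall A C : X -> Prop, stable perp A -> stable perp C ->
      (subset A C <-> subset (fun _ : X => True) (impl perp T A C))).
Proof.
  intros [_ [_ [F0 [_ [_ [F3 F4]]]]]].
  split; [|split; [|split; [|split]]].
  - intros I J A C _ HC. exact (impl_bigjoin_bigcap perp T F4 A C HC).
  - intros A C _ _. exact (impl_eq_bigcap_principal perp T F3 A C).
  - exact (Tdual_iff_impl_principal perp T F3).
  - intros A C _ _. exact (implP perp T A C).
  - intros A C _ HC. exact (subset_iff_impl_full perp T F0 A C HC).
Qed.
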